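(* Assume $\bm\lambda\neq0$ and $\bm\mu\neq0$. For $r\in\mathbb Z$ and a polynomial $f\in\mathbb C[x]$ define the operator $T_{r,f}=\sum_{j\in\mathbb Z} f(-j)\,:a(r-j)a^*(j):$ on $M_1(\bm\lambda,\bm\mu)$ (well defined, since on each vector only finitely many summands act nontrivially). Then $M_1(\bm\lambda,\bm\mu)$ is generated by $w$ under the operators $T_{r,f}$, i.e. the smallest subspace containing $w$ and invariant under all $T_{r,f}$ is $M_1(\bm\lambda,\bm\mu)$. Equivalently, $M_1(\bm\lambda,\bm\mu)$ is a cyclic module, generated by $w$, for the vertex algebra $\mathcal W_{1+\infty,c=-1}\cong M^0$.
   Context: Let $\widehat{\mathcal A}$ be the Weyl algebra: the unital associative complex algebra generated by $a(r),a^*(r)$ ($r\in\mathbb Z$) with relations $[a(r),a(s)]=[a^*(r),a^*(s)]=0$ and $[a(r),a^*(s)]=\delta_{r+s,0}$. Fix integers $n\ge 0$, $m\ge 1$, $\bm\lambda=(\lambda_0,\dots,\lambda_n)\in\mathbb C^{n+1}$, $\bm\mu=(\mu_1,\dots,\mu_m)\in\mathbb C^m$, and set $\lambda_i=0$ for $i>n$, $\mu_j=0$ for $j>m$. The Whittaker module $M_1(\bm\lambda,\bm\mu)=\widehat{\mathcal A}/\mathcal I$, where $\mathcal I$ is the left ideal generated by $a(i)-\lambda_i$ ($i\ge 0$) and $a^*(j)-\mu_j$ ($j\ge 1$); $w=w_{\bm\lambda,\bm\mu}$ denotes the image of $1$. Normal ordering: $:a(i)a^*(j):$ equals $a^*(j)a(i)$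 if $i\ge 0$ and $j\le 0$, and equals $a(i)a^*(j)$ otherwise. The operators $T_{r,f}$ are the images of $t^rf(D)$ ($D=t\,\partial_t$) under the representation of the central extension $\widehat{\mathcal D}$ of the Lie algebra of regular differential operators on $\mathbb C^*$; the Weyl vertex algebra $M$ has fields $a(z)=\sum a(r)z^{-r-1}$, $a^*(z)=\sum a^*(r)z^{-r}$, its subalgebra $M^0=\ker J^0(0)$ (with $J^0(z)=:a(z)a^*(z):$) is isomorphic to the simple vertex algebra $\mathcal W_{1+\infty}$ at central charge $-1$, and it is generated by the fields $:(\partial_z^k a^*(z))a(z):$, $k\ge0$, whose modes are the operators $T_{r,f}$ with $f(x)=x(x-1)\cdots(x-k+1)$. *)

From HB Require Import structures.
From mathcomp Require Import all_boot all_order all_algebra.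
From mathcomp Require Import finmap.
From mathcomp.multinomials Require Import monalg.
From mathcomp Require Import complex.
From mathcomp Require Import Rstruct.

Set Implicit Arguments.
Unset Strict Implicit.
Unset Printing Implicit Defensive.

Import Order.TTheory GRing.Theory Num.Theory.
Local Open Scope ring_scope.

Notation CC := (complex Rdefinitions.R).

(* Concrete model of the Whittaker module M_1(lam, mu) = \hat A / I.          *)
(* By PBW, \hat A / I is the free module over the "creation" variables       *)
(*    a(-k-1)  (k : nat)   <->  variable  inl k                              *)
(*    a*(-k)   (k : nat)   <->  variable  inr k                              *)
(* i.e. it is the polynomial ring in these infinitely many commuting          *)
(* variables, w = 1, and                                                     *)
(*    a(r)  , r < 0  : multiplication by the variable inl (-r-1)             *)
(*    a(r)  , r >= 0 : lam_r + d/d(inr r)                                    *)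
(*    a*(s) , s <= 0 : multiplication by the variable inr (-s)               *)
(*    a*(s) , s >= 1 : mu_s - d/d(inl (s-1))                                 *)

Definition Var : choiceType := (nat + nat)%type.
Definition Mon := cmonom Var.

Section Whittaker.
Variable K : fieldType.

Definition Wmod : Type := {malg K[Mon]}.

Definition mulvar (x : Var) (v : Wmod) : Wmod :=
  \sum_(mo <- msupp v) << v@_mo *g mulcm (ucm x) mo >>.

Definition dervar (x : Var) (v : Wmod) : Wmod :=
  \sum_(mo <- msupp v) << (v@_mo *+ (mo : Mon) x) *g divcm mo (ucm x) >>.

Variables (n m : nat) (lam : 'rV[K]_(n.+1)) (mu : 'rV[K]_m).

(* lam_i (i >= 0) and mu_j (j >= 1), extended by 0 *)
Definition lamx (i : nat) : K :=
  if (i < n.+1)%N =P true is ReflectT h then lam 0 (Ordinal h) else 0.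
Definition mux (j : nat) : K :=
  if (j.-1 < m)%N =P true is ReflectT h then
    (if (0 < j)%N then mu 0 (Ordinal h) else 0) else 0.

Definition aop (r : int) (v : Wmod) : Wmod :=
  match r with
  | Posz i => lamx i *: v + dervar (inr i) v
  | Negz k => mulvar (inl k) v
  end.

Definition astarop (s : int) (v : Wmod) : Wmod :=
  match s with
  | Posz 0 => mulvar (inr 0%N) v
  | Posz j => mux j *: v - dervar (inl j.-1) v
  | Negz k => mulvar (inr k.+1) v
  end.

Definition wvec : Wmod := 1%:MP.

Definition nord (i j : int) (v : Wmod) : Wmod :=
  if (0 <= i) && (j <= 0) then astarop j (aop i v) else aop i (astarop j v).

Definition Tpartial (r : int) (f : {poly K}) (v : Wmod) (N : nat) : Wmod :=
  \sum_(k < (2 * N).+1)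
     let j : int := k%:Z - N%:Z in f.[- j%:~R] *: nord (r - j) j v.

(* T_{r,f} v = u : the (finitely supported) series sum_j f(-j) :a(r-j)a*(j): v
   equals u, i.e. its symmetric partial sums are eventually equal to u. *)
Definition Tval (r : int) (f : {poly K}) (v u : Wmod) : Prop :=
  exists N0 : nat, forall N : nat, (N0 <= N)%N -> Tpartial r f v N = u.

End Whittaker.

From HB Require Import structures.
From mathcomp Require Import all_boot all_order all_algebra.
From mathcomp Require Import finmap.
From mathcomp.multinomials Require Import monalg.
From mathcomp Require Import complex.
From mathcomp Require Import Rstruct.
From mathcomp Require Import zify.
Import GRing.Theory.
Local Open Scope ring_scope.

Set Implicit Arguments.
Unset Strict Implicit.

(* On a fixed vector only finitely many of the products :a(r-j)a*(j): are
   nonzero, so a polynomial f vanishing at -j for all of them but one isolates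
   a single product: a subspace containing w and stable under all T_{r,f} is
   stable under every :a(p)a*(q):.  Fix lambda_i <> 0 and mu_(j+1) <> 0.  On a
   monomial u of the PBW basis, :a(-k-1)a*(j+1): u is mu_(j+1) a(-k-1) u and
   :a(i)a*(-k): u is lambda_i a*(-k) u, each up to a multiple of a monomial of
   the same degree as u (coming from the derivative parts of a*(j+1) and a(i)).
   Induction on the degree thus reaches every monomial. *)

Section MonomialDivision.
Variable I : choiceType.
Implicit Types (mo : cmonom I) (y : I).

Lemma mulcm_divcmU mo y : (0 < mo y)%N -> mulcm (ucm y) (divcm mo (ucm y)) = mo.
Proof.
move=> mo_y; apply/eqP/cmP => z; rewrite mulcmE divcmE ucmE.
by case: eqP => [<-|_]; rewrite ?add0n ?subn0 // add1n subn1 prednK.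
Qed.

Lemma mdeg_mulcmU y mo : mdeg (mulcm (ucm y) mo) = (mdeg mo).+1.
Proof. by rewrite (mdegM (ucm y) mo) mdegU. Qed.

Lemma mdeg_divcmU mo y : (0 < mo y)%N -> (mdeg (divcm mo (ucm y))).+1 = mdeg mo.
Proof. by move=> mo_y; rewrite -(mdeg_mulcmU y) mulcm_divcmU. Qed.
End MonomialDivision.

Lemma rowV_neq0 (R : nzRingType) (k : nat) (v : 'rV[R]_k) :
  v != 0 -> exists j, v 0 j != 0.
Proof.
move=> v_neq0; apply/existsP; apply: contraR v_neq0 => /existsPn v0.
by apply/eqP/rowP => j; rewrite mxE; apply/eqP/negPn/v0.
Qed.

Lemma pchar0_intr_inj (K : idomainType) : [pchar K] =i pred0 ->
  injective (fun z : int => z%:~R : K).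
Proof.
move=> K0 a b /eqP; rewrite -subr_eq0 -intrB => /eqP ab0; apply/eqP; rewrite -subr_eq0.
move: ab0; case: (a - b) => k /eqP; rewrite ?NegzE ?mulrNz ?oppr_eq0 -pmulrn.
  by rewrite ((pcharf0P K).1 K0) // => /eqP ->.
by rewrite ((pcharf0P K).1 K0).
Qed.

Definition zrange (N : nat) : seq int := [seq k%:Z - N%:Z | k <- iota 0 (2 * N).+1].

Lemma mem_zrange N j : (j \in zrange N) = (`|j| <= N)%N.
Proof.
apply/mapP/idP => [[k] | le_jN]; first by rewrite mem_iota => /andP[_ lt_k] ->; lia.
by exists (absz (j + N%:Z)); rewrite ?mem_iota; lia.
Qed.

Lemma zrange_uniq N : uniq (zrange N).
Proof. by rewrite map_inj_uniq ?iota_uniq // => a b /addIr []. Qed.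

Section CoefficientwiseMaps.
Variables (M : monomType) (R : comNzRingType).

Lemma malgUZ (c : R) (k : M) : << c *g k >> = c *: << k >> :> {malg R[M]}.
Proof. by apply/malgP => k'; rewrite mcoeffZ !mcoeffU mulr_natr. Qed.

Lemma mmapC_is_scalable (h : M -> {malg R[M]}) : scalable (mmap malgC h).
Proof.
move=> c g; rewrite (mmapEw (msuppZ_le c g)) mmapE scaler_sumr.
by apply: eq_bigr => k _; rewrite mcoeffZ /= mpolyCM -mulrA mul_malgC.
Qed.

Lemma mmapCU (h : M -> {malg R[M]}) (c : R) (k : M) :
  mmap malgC h << c *g k >> = c *: h k.
Proof. by rewrite mmapU mul_malgC. Qed.
End CoefficientwiseMaps.

Section VariableOperators.
Variable K : fieldType.
Local Notation W := (Wmod K).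

Lemma mulvarE x : @mulvar K x =1 mmap malgC (fun mo : Mon => << mulcm (ucm x) mo >>).
Proof. by move=> v; apply: eq_bigr => mo _; rewrite /= mul_malgC; exact: malgUZ. Qed.

Lemma dervarE x :
  @dervar K x =1 mmap malgC (fun mo : Mon => << (mo x)%:R *g divcm mo (ucm x) >>).
Proof.
move=> v; apply: eq_bigr => mo _; rewrite /= mul_malgC.
by rewrite [LHS]malgUZ [in RHS]malgUZ scalerA mulr_natr.
Qed.

Lemma mulvar_is_linear x : linear (@mulvar K x).
Proof. by move=> c u v; rewrite !mulvarE mmapD mmapC_is_scalable. Qed.

HB.instance Definition _ x :=
  GRing.isLinear.Build K W W *:%R (mulvar x) (mulvar_is_linear x).

Lemma dervar_is_linear x : linear (@dervar K x).
Proof. by move=> c u v; rewrite !dervarE mmapD mmapC_is_scalable. Qed.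

HB.instance Definition _ x :=
  GRing.isLinear.Build K W W *:%R (dervar x) (dervar_is_linear x).

Lemma mulvarU x mo : mulvar x << mo >> = << mulcm (ucm x) mo >> :> W.
Proof. by rewrite mulvarE mmapCU scale1r. Qed.

Lemma dervarU x mo : dervar x << mo >> = (mo x)%:R *: << divcm mo (ucm x) >> :> W.
Proof. rewrite dervarE mmapCU scale1r; exact: malgUZ. Qed.

Definition var_index (y : Var) : nat := match y with inl k | inr k => k end.

Definition var_bound (v : W) : nat :=
  \max_(mo <- msupp v) \max_(y <- finsupp (mo : Mon)) (var_index y).+1.

Lemma var_bound_spec v mo y :
  mo \in msupp v -> (var_bound v <= var_index y)%N -> (mo : Mon) y = 0%N.
Proof.
move=> mo_v le_vy; apply/eqP; rewrite cmE_eq0; apply: contraTN le_vy => y_mo.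
rewrite -ltnNge; apply: (@leq_trans (\max_(y <- finsupp mo) (var_index y).+1)%N).
  exact: (@leq_bigmax_seq _ _ xpredT (fun y => (var_index y).+1) y).
exact: (@leq_bigmax_seq _ _ xpredT
  (fun mo : Mon => \max_(y <- finsupp mo) (var_index y).+1)%N mo).
Qed.

Lemma dervar_eq0 y v : (var_bound v <= var_index y)%N -> dervar y v = 0.
Proof.
move=> le_vy; rewrite dervarE mmapE big1_seq // => mo /andP[_ mo_v].
by rewrite (var_bound_spec mo_v le_vy) mulr0n monalgU0 mulr0.
Qed.
End VariableOperators.

Section Whittaker.
Variables (K : fieldType) (n m : nat) (lam : 'rV[K]_(n.+1)) (mu : 'rV[K]_m).
Local Notation W := (Wmod K).
Implicit Types (v : W).

Lemma lamx_ord (i : 'I_n.+1) : lamx lam i = lam 0 i.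
Proof.
rewrite /lamx; case: eqP => [lt_in|]; last by rewrite ltn_ord.
by congr (lam 0 _); apply: val_inj.
Qed.

Lemma lamx_out i : (n < i)%N -> lamx lam i = 0.
Proof. by rewrite /lamx; case: eqP => // lt_in; lia. Qed.

Lemma mux_ord (j : 'I_m) : mux mu j.+1 = mu 0 j.
Proof.
rewrite /mux; case: eqP => [lt_jm|] /=; last by rewrite ltn_ord.
by congr (mu 0 _); apply: val_inj.
Qed.

Lemma mux_out j : (m < j)%N -> mux mu j = 0.
Proof. by rewrite /mux; case: eqP => // lt_jm; case: j lt_jm => //= j; lia. Qed.

Lemma nord_eq0 r j v : (var_bound v + n + m + `|r| < `|j|)%N ->
  nord lam mu (r - j) j v = 0.
Proof.
rewrite /nord; case: j => [j|k] lt_j.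
- case E: (r - Posz j) => [i|i] /=; first lia.
  case: j E lt_j => [|j] E lt_j /=; first lia.
  by rewrite mux_out ?dervar_eq0 /=; [rewrite scale0r subrr linear0 | lia | lia].
- case E: (r - Negz k) => [i|i] /=; last lia.
  by rewrite lamx_out ?dervar_eq0 /=; [rewrite scale0r addr0 linear0 | lia | lia].
Qed.

Lemma TpartialE r f v N : Tpartial lam mu r f v N =
  \sum_(j <- zrange N) f.[- j%:~R] *: nord lam mu (r - j) j v.
Proof.
by rewrite /Tpartial /zrange big_map -[iota 0 _]/(index_iota 0 (2 * N).+1) big_mkord.
Qed.

(* [dervar _ v] is generalized so that [rewrite] cannot unfold it while
   matching the scaled argument. *)
Lemma nord_inl k j v : nord lam mu (Negz k) j.+1 v =
  mux mu j.+1 *: mulvar (inl k) v - mulvar (inl k) (dervar (inl j) v).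
Proof. by rewrite /nord /= linearB; move: (dervar _ v) => w; rewrite linearZZ. Qed.

Lemma nord_inr (i k : nat) v : nord lam mu i (- k%:Z) v =
  lamx lam i *: mulvar (inr k) v + mulvar (inr k) (dervar (inr i) v).
Proof.
by case: k => [|k]; rewrite /nord /= linearD; move: (dervar _ v) => w; rewrite linearZZ.
Qed.

Hypothesis K_pchar0 : [pchar K] =i pred0.

Lemma Tval_isolate r j0 v : exists2 f : {poly K}, f.[- j0%:~R] != 0 &
  Tval lam mu r f v (f.[- j0%:~R] *: nord lam mu (r - j0) j0 v).
Proof.
pose B := (var_bound v + n + m + `|r| + `|j0|)%N.
pose f : {poly K} := \prod_(z <- [seq - j%:~R | j <- zrange B & j != j0]) ('X - z%:P).
have f_root j : root f (- j%:~R) = (j != j0) && (j \in zrange B).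
  rewrite root_prod_XsubC; apply/mapP/idP => [[j'] | j_in].
    by rewrite mem_filter => j'_in /oppr_inj /(pchar0_intr_inj K_pchar0) ->.
  by exists j; rewrite ?mem_filter.
exists f; first by rewrite -rootE f_root eqxx.
exists B => N le_BN.
rewrite TpartialE (bigD1_seq j0) ?zrange_uniq ?mem_zrange //=; last lia.
rewrite big1_seq ?addr0 // => j /andP[j_neq j_in].
have [le_jB | lt_Bj] := leqP `|j| B.
  by move/rootP: (f_root j); rewrite mem_zrange le_jB j_neq => ->; rewrite scale0r.
by rewrite nord_eq0 ?scaler0 //; lia.
Qed.
End Whittaker.

Section Span.
Variables (K : fieldType) (n m : nat) (lam : 'rV[K]_(n.+1)) (mu : 'rV[K]_m).
Hypothesis K_pchar0 : [pchar K] =i pred0.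
Local Notation W := (Wmod K).
Variable S : W -> Prop.
Hypothesis S0 : S 0.
Hypothesis S_lin : forall c u v, S u -> S v -> S (c *: u + v).
Hypothesis S_T : forall r f v u, S v -> Tval lam mu r f v u -> S u.

Lemma S_scale c u : S u -> S (c *: u).
Proof. by move=> Su; have := S_lin c Su S0; rewrite addr0. Qed.

Lemma S_add u v : S u -> S v -> S (u + v).
Proof. by move=> Su Sv; have := S_lin 1 Su Sv; rewrite scale1r. Qed.

Lemma S_cancel c u v : c != 0 -> S (c *: u + v) -> S v -> S u.
Proof.
move=> c_neq0 Suv Sv; have := S_lin c^-1 Suv (S_scale (- c^-1) Sv).
by rewrite scalerDr scalerA mulVf // scale1r scaleNr addrK.
Qed.

Lemma S_nord p q v : S v -> S (nord lam mu p q v).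
Proof.
move=> Sv; have [f f_neq0 Tf] := Tval_isolate lam mu K_pchar0 (p + q) q v.
by have := S_scale (f.[- q%:~R])^-1 (S_T Sv Tf); rewrite addrK scalerA mulVf // scale1r.
Qed.

Section Monomials.
Variables (i0 j0 : nat).
Hypotheses (lam_i0 : lamx lam i0 != 0) (mu_j0 : mux mu j0.+1 != 0).
Hypothesis S_w : S (wvec K).

(* Goals [S _] are closed by explicit [exact:]: [done] would compare them with
   [S0] or [S_w] by conversion, unfolding the finitely supported functions. *)
Lemma S_malgU mo : S << mo >>.
Proof.
move deg_mo : (mdeg mo) => d; elim/ltn_ind: d mo deg_mo => d IH mo deg_mo.
case: (fset_0Vmem (finsupp mo)) => [supp0 | [y y_mo]].
  have /mdeg_eq0I -> : mdeg mo = 0%N by rewrite mdegE supp0 big_seq_fset0.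
  exact: S_w.
have mo_y : (0 < mo y)%N by rewrite lt0n cmE_neq0.
rewrite -(mulcm_divcmU mo_y) mdeg_mulcmU in deg_mo *.
move: (divcm mo (ucm y)) deg_mo => mo' deg_mo; clear mo y_mo mo_y.
have deg_mo' : (mdeg mo' < d)%N by rewrite -deg_mo.
have S_mo' : S << mo' >> := IH _ deg_mo' mo' erefl.
have S_dervar x z : S (mulvar x (dervar z << mo' >>)).
  rewrite dervarU linearZZ /= mulvarU; case: (posnP (mo' z)) => [-> | mo'_z].
    rewrite scale0r; exact: S0.
  apply/S_scale/(IH _ deg_mo').
  by rewrite mdeg_mulcmU mdeg_divcmU.
rewrite -mulvarU; case: y => k.
- apply: (S_cancel mu_j0 _ (S_scale (-1) (S_dervar (inl k) (inl j0)))).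
  rewrite scaleN1r -(nord_inl lam); exact: S_nord S_mo'.
- apply: (S_cancel lam_i0 _ (S_dervar (inr k) (inr i0))).
  rewrite -(nord_inr lam mu); exact: S_nord S_mo'.
Qed.

Lemma S_all v : S v.
Proof.
rewrite (monalgE v); elim/big_ind: _; [exact: S0 | exact: S_add |].
move=> mo _; rewrite malgUZ; exact/S_scale/S_malgU.
Qed.
End Monomials.
End Span.

Theorem theorem5p2 (n m : nat) (lam : 'rV[CC]_(n.+1)) (mu : 'rV[CC]_m) :
  (0 < m)%N -> lam != 0 -> mu != 0 ->
  forall S : Wmod CC -> Prop,
    S (wvec CC) ->
    S 0 ->
    (forall (c : CC) (u v : Wmod CC), S u -> S v -> S (c *: u + v)) ->
    (forall (r : int) (f : {poly CC}) (v u : Wmod CC),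
        S v -> Tval lam mu r f v u -> S u) ->
    forall v : Wmod CC, S v.
Proof.
move=> _ lam_neq0 mu_neq0 S S_w S0 S_lin S_T.
have [i lam_i] := rowV_neq0 lam_neq0; rewrite -lamx_ord in lam_i.
have [j mu_j] := rowV_neq0 mu_neq0; rewrite -mux_ord in mu_j.
exact: (S_all (@Num.Theory.pchar_num CC) S0 S_lin S_T lam_i mu_j S_w).
Qed.
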